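(* Let $m\ge 1$ be an integer and let $p,p'\in[0,1]$ satisfy $|p-p'|<1$; put $q=1-p$, $q'=1-p'$. Let $\{S_n:n\ge 0\}$ be the Markov chain on $\mathbb{Z}$ with $S_0=0$ and with $S_{n+1}-S_n\in\{-1,+1\}$, where \[ P(S_{n+1}-S_n=1\mid S_0,\dots,S_n)=p'\,1_{[S_n\in m\mathbb{Z}]}+p\,1_{[S_n\notin m\mathbb{Z}]} . \] Let $p^\ast_m$ denote the probability that this walk, started at $0$, reaches $m$ before it reaches $-m$ (equivalently, the constant probability of an up-step of the embedded walk $\{J_n\}$ on $m\mathbb{Z}$ described below). Then \[ p^\ast_m=\frac{p'p^{m-1}}{p'p^{m-1}+q'q^{m-1}} . \]
   Context: The walk in the claim is called the Parrondo game $G(m,p,p')$. Its embedded walk on the lattice $m\mathbb{Z}$ is defined via the times $T_0=0$, $T_1=\min\{n\ge 0: S_n\in m\mathbb{Z}\}$, $T_{k+1}=\min\{n>T_k: S_n-S_{T_k}=\pm m\}$ (minimum of the empty set is $+\infty$), and $J_n=m^{-1}S_{T_{n+1}}$; $\{J_n\}$ is a simple random walk on $\mathbb{Z}$ whose probability of a $+1$ step, $P(J_{n+1}-J_n=1\mid J_n)$, is the constant $p^\ast_m$. *)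

From HB Require Import structures.
From mathcomp Require Import all_boot all_order all_algebra.
From mathcomp Require Import all_classical all_reals all_analysis.
Set Implicit Arguments. Unset Strict Implicit. Unset Printing Implicit Defensive.
Import Order.TTheory GRing.Theory Num.Theory.
Local Open Scope ring_scope.

(* A sample path of n steps of the walk is encoded by its step sequence
   s : n.-tuple bool  (true = +1 step, false = -1 step). *)

Definition walk_pos (s : seq bool) (k : nat) : int :=
  \sum_(i < k) (if nth false s i then 1 else -1).

Definition up_prob (R : ringType) (m : nat) (p p' : R) (x : int) : R :=
  if (m%:Z %| x)%Z then p' else p.

Definition path_weight (R : ringType) (m : nat) (p p' : R) (s : seq bool) : R :=
  \prod_(i < size s)
     (if nth false s i then up_prob m p p' (walk_pos s i)
      else 1 - up_prob m p p' (walk_pos s i)).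

Definition hits_m_before_neg_m (m n : nat) (s : seq bool) : bool :=
  [exists k : 'I_n.+1,
     (walk_pos s k == m%:Z) && [forall j : 'I_k, walk_pos s j != - m%:Z]].

Definition hit_prob_upto (R : ringType) (m : nat) (p p' : R) (n : nat) : R :=
  \sum_(s : n.-tuple bool) path_weight m p p' s * (hits_m_before_neg_m m n s)%:R.

(* p*_m = P(reach m before -m) = lim_n P(reach m before -m within n steps). *)

From HB Require Import structures.
From mathcomp Require Import all_boot all_order all_algebra.
From mathcomp Require Import all_classical all_reals all_analysis.
From mathcomp Require Import zify ring lra.
Set Implicit Arguments. Unset Strict Implicit. Unset Printing Implicit Defensive.
Import Order.TTheory GRing.Theory Num.Theory.
Import numFieldNormedType.Exports.
Local Open Scope classical_set_scope.
Local Open Scope ring_scope.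

(* First-step analysis: the probability h_n(x) of reaching m before -m within n
   steps from x satisfies h_(n+1)(x) = u(x) h_n(x+1) + (1 - u(x)) h_n(x-1), with
   h = 1 at m and h = 0 at -m.  It increases with n to a limit h solving the same
   harmonic equations.  Between 0 and m the up-probability is the constant p, so
   the increments satisfy p^i (h(i+1) - h(i)) = q^i (h(1) - h(0)); summing them
   gives p^(m-1) (1 - h(0)) = S (h(1) - h(0)) with S = sum_i p^(m-1-i) q^i, and
   symmetrically q^(m-1) h(0) = S (h(0) - h(-1)) with the same S.  The equation at
   0, h(0) = p' h(1) + q' h(-1), then gives p' p^(m-1) (1 - h(0)) = q' q^(m-1) h(0). *)

Lemma sum_tuple0 (R : nmodType) (T : finType) (G : 0.-tuple T -> R) :
  \sum_(t : 0.-tuple T) G t = G [tuple].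
Proof.
rewrite (eq_bigr (fun _ => G [tuple])) => [|t _]; last by rewrite tuple0.
by rewrite sumr_const card_tuple.
Qed.

Lemma sum_tupleS (R : nmodType) (T : finType) n (G : n.+1.-tuple T -> R) :
  \sum_(t : n.+1.-tuple T) G t = \sum_(x : T) \sum_(t : n.-tuple T) G [tuple of x :: t].
Proof.
rewrite pair_big /= (reindex (fun xt : T * n.-tuple T => [tuple of xt.1 :: xt.2])) //=.
exists (fun t : n.+1.-tuple T => (thead t, [tuple of behead t])) => [[x t] _ | t _] /=.
  by rewrite theadE; congr (_, _); apply: val_inj.
by rewrite [RHS]tuple_eta; apply: val_inj.
Qed.

Lemma exists_ord_recl n (P : pred 'I_n.+1) :
  [exists k, P k] = P ord0 || [exists k : 'I_n, P (lift ord0 k)].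
Proof.
apply/existsP/orP => [[k Pk] | [P0 | /existsP[k Pk]]]; last 2 first.
- by exists ord0.
- by exists (lift ord0 k).
by case: (unliftP ord0 k) Pk => [j -> | ->]; [right; apply/existsP; exists j | left].
Qed.

Lemma forall_ord_recl n (P : pred 'I_n.+1) :
  [forall k, P k] = P ord0 && [forall k : 'I_n, P (lift ord0 k)].
Proof. by apply: negb_inj; rewrite negb_and !negb_forall exists_ord_recl. Qed.

Definition step (b : bool) : int := if b then 1 else -1.

Lemma walk_pos0 s : walk_pos s 0 = 0.
Proof. by rewrite /walk_pos big_ord0. Qed.

Lemma walk_posS b s k : walk_pos (b :: s) k.+1 = step b + walk_pos s k.
Proof. by rewrite /walk_pos big_ord_recl. Qed.

Section FirstStep.
Variables (R : ringType) (m : nat) (p p' : R).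

Lemma up_prob0 : up_prob m p p' 0 = p'.
Proof. by rewrite /up_prob dvdz0. Qed.

Lemma up_probN x : up_prob m p p' (- x) = up_prob m p p' x.
Proof. by rewrite /up_prob !dvdzE abszN. Qed.

Lemma up_prob_off_lattice i : (0 < i < m)%N -> up_prob m p p' i%:Z = p.
Proof. by case/andP=> i0 im; rewrite /up_prob dvdzE absz_nat gtnNdvd. Qed.

Definition step_prob (b : bool) (x : int) : R :=
  if b then up_prob m p p' x else 1 - up_prob m p p' x.

Definition weight_from (x : int) (s : seq bool) : R :=
  \prod_(i < size s) step_prob (nth false s i) (x + walk_pos s i).

Definition hits_from (x : int) (s : seq bool) : bool :=
  [exists k : 'I_(size s).+1, (x + walk_pos s k == m%:Z) &&
     [forall j : 'I_k, x + walk_pos s j != - m%:Z]].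

Lemma weight_from_nil x : weight_from x [::] = 1.
Proof. exact: big_ord0. Qed.

Lemma weight_from_cons x b s :
  weight_from x (b :: s) = step_prob b x * weight_from (x + step b) s.
Proof.
rewrite /weight_from big_ord_recl /= walk_pos0 addr0; congr (_ * _).
by apply: eq_bigr => i _; rewrite walk_posS addrA.
Qed.

Lemma hits_from_nil x : hits_from x [::] = (x == m%:Z).
Proof.
rewrite /hits_from exists_ord_recl /= walk_pos0 addr0 -big_andE big_ord0 andbT.
by rewrite -big_orE big_ord0 orbF.
Qed.

Lemma hits_from_cons x b s :
  hits_from x (b :: s) = (x == m%:Z) || (x != - m%:Z) && hits_from (x + step b) s.
Proof.
rewrite /hits_from exists_ord_recl /= walk_pos0 addr0 -big_andE big_ord0 andbT.
congr orb.
under eq_existsb => k do rewrite /= walk_posS addrA forall_ord_recl /= walk_pos0 addr0.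
case: (x != - m%:Z) => /=; last by apply/negbTE/existsPn => k; rewrite andbF.
apply: eq_existsb => k; congr andb; apply: eq_forallb => j.
by rewrite /bump add1n walk_posS addrA.
Qed.

Lemma path_weightE s : path_weight m p p' s = weight_from 0 s.
Proof. by apply: eq_bigr => i _; rewrite add0r. Qed.

Lemma hits_m_before_neg_mE s : hits_m_before_neg_m m (size s) s = hits_from 0 s.
Proof.
apply: eq_existsb => k; rewrite add0r; congr andb.
by apply: eq_forallb => j; rewrite add0r.
Qed.

Lemma sum_weight_from n x : \sum_(t : n.-tuple bool) weight_from x t = 1.
Proof.
elim: n x => [|n IHn] x; first by rewrite sum_tuple0 weight_from_nil.
rewrite sum_tupleS big_bool /=.
under eq_bigr do rewrite weight_from_cons.
under [X in _ + X]eq_bigr do rewrite weight_from_cons.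
by rewrite -!big_distrr /= !IHn !mulr1 /step_prob addrC subrK.
Qed.

Fixpoint hit_prob_from (n : nat) (x : int) : R :=
  if n is n'.+1 then
    if x == m%:Z then 1 else if x == - m%:Z then 0 else
    up_prob m p p' x * hit_prob_from n' (x + 1) +
    (1 - up_prob m p p' x) * hit_prob_from n' (x - 1)
  else (x == m%:Z)%:R.

Lemma sum_weight_hits_from n x :
  \sum_(t : n.-tuple bool) weight_from x t * (hits_from x t)%:R = hit_prob_from n x.
Proof.
elim: n x => [|n IHn] x.
  by rewrite sum_tuple0 weight_from_nil hits_from_nil mul1r.
rewrite sum_tupleS big_bool /=.
under eq_bigr do rewrite weight_from_cons hits_from_cons -mulrA.
under [X in _ + X]eq_bigr do rewrite weight_from_cons hits_from_cons -mulrA.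
have [_ | _] /= := eqP.
  under eq_bigr do rewrite mulr1.
  under [X in _ + X]eq_bigr do rewrite mulr1.
  by rewrite -!big_distrr /= !sum_weight_from !mulr1 /step_prob addrC subrK.
have [_ | _] /= := eqP; last by rewrite -!big_distrr /= !IHn.
by rewrite !big1 ?addr0 // => t _; rewrite !mulr0.
Qed.

Lemma hit_prob_uptoE n : hit_prob_upto m p p' n = hit_prob_from n 0.
Proof.
rewrite -sum_weight_hits_from; apply: eq_bigr => t _.
by rewrite path_weightE -hits_m_before_neg_mE size_tuple.
Qed.

End FirstStep.

Section GamblersRuin.
Variable R : comRingType.

Definition ruin_sum (p : R) (m : nat) : R :=
  \sum_(i < m) p ^+ (m.-1 - i) * (1 - p) ^+ i.

Lemma ruin_sum_subr p m : ruin_sum (1 - p) m = ruin_sum p m.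
Proof.
rewrite /ruin_sum (reindex_inj rev_ord_inj) /=; apply: eq_bigr => i _.
have lt_im := ltn_ord i.
by rewrite subKr mulrC; congr (_ ^+ _ * _ ^+ _); lia.
Qed.

Lemma harmonic_increment p m (a : nat -> R) :
  (forall i, (i.+2 <= m)%N -> a i.+1 = p * a i.+2 + (1 - p) * a i) ->
  p ^+ m.-1 * (a m - a 0%N) = ruin_sum p m * (a 1%N - a 0%N).
Proof.
move=> harm_a.
have incr i : (i < m)%N -> p ^+ i * (a i.+1 - a i) = (1 - p) ^+ i * (a 1%N - a 0%N).
  elim: i => [|i IHi] lt_im; first by rewrite !expr0.
  have -> : p ^+ i.+1 * (a i.+2 - a i.+1) = (1 - p) * (p ^+ i * (a i.+1 - a i)).
    by rewrite exprS (harm_a i lt_im); ring.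
  by rewrite IHi ?(ltnW lt_im) // exprS mulrA.
rewrite -(telescope_sumr _ (leq0n m)) big_mkord big_distrr big_distrl /=.
apply: eq_bigr => i _; have lt_im := ltn_ord i.
rewrite -[in LHS](subnK (_ : i <= m.-1)%N) ?exprD; last by lia.
by rewrite -mulrA incr // mulrA.
Qed.

Lemma two_sided_ruin (p p' : R) m (a b : nat -> R) :
  a 0%N = b 0%N -> a m = 1 -> b m = 0 ->
  (forall i, (i.+2 <= m)%N -> a i.+1 = p * a i.+2 + (1 - p) * a i) ->
  (forall i, (i.+2 <= m)%N -> b i.+1 = p * b i + (1 - p) * b i.+2) ->
  a 0%N = p' * a 1%N + (1 - p') * b 1%N ->
  p' * p ^+ m.-1 * (1 - a 0%N) = (1 - p') * (1 - p) ^+ m.-1 * a 0%N.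
Proof.
move=> ab0 am bm harm_a harm_b first_step.
have incr_a := harmonic_increment harm_a.
have incr_b : (1 - p) ^+ m.-1 * (b m - b 0%N) = ruin_sum p m * (b 1%N - b 0%N).
  by rewrite -ruin_sum_subr; apply: harmonic_increment => i /harm_b ->; rewrite subKr; ring.
have balance : p' * (a 1%N - a 0%N) + (1 - p') * (b 1%N - b 0%N) = 0.
  rewrite -ab0 -(subrr (a 0%N)) [X in _ = X - _]first_step; ring.
transitivity (p' * (p ^+ m.-1 * (a m - a 0%N))); first by rewrite am; ring.
transitivity (- ((1 - p') * ((1 - p) ^+ m.-1 * (b m - b 0%N)))); last first.
  by rewrite bm -ab0; ring.
rewrite incr_a incr_b; apply/eqP; rewrite -subr_eq0 opprK.
by rewrite -(mulr0 (ruin_sum p m)) -balance; apply/eqP; ring.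
Qed.

End GamblersRuin.

Lemma ruin_denom_gt0 (R : realDomainType) (p p' : R) k :
  0 <= p <= 1 -> 0 <= p' <= 1 -> `|p - p'| < 1 ->
  0 < p' * p ^+ k + (1 - p') * (1 - p) ^+ k.
Proof.
move=> /andP[p0 p1] /andP[p'0 p'1]; rewrite ltr_norml => /andP[lt_p'p lt_pp'].
rewrite lt0r addr_ge0 ?mulr_ge0 ?exprn_ge0 ?subr_ge0 // andbT.
rewrite paddr_eq0 ?mulr_ge0 ?exprn_ge0 ?subr_ge0 // !mulf_eq0 !expf_eq0.
by apply/negP => /andP[/orP[/eqP|/andP[_ /eqP]] ? /orP[/eqP|/andP[_ /eqP]] ?]; lra.
Qed.

Section HitProbBounds.
Variables (R : realDomainType) (m : nat) (p p' : R).
Hypotheses (p01 : 0 <= p <= 1) (p'01 : 0 <= p' <= 1).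

Lemma up_prob01 x : 0 <= up_prob m p p' x <= 1.
Proof. by rewrite /up_prob; case: ifP. Qed.

Lemma hit_prob_from01 n x : 0 <= hit_prob_from m p p' n x <= 1.
Proof.
elim: n x => [|n IHn] x /=; first by case: eqP; rewrite ?lexx ?ler01.
case: eqP => _; first by rewrite ler01 lexx.
case: eqP => _; first by rewrite lexx ler01.
have /andP[u0 u1] := up_prob01 x.
have /andP[? ?] := IHn (x + 1); have /andP[? ?] := IHn (x - 1).
by apply/andP; split; nra.
Qed.

Lemma hit_prob_fromS_ge n x : hit_prob_from m p p' n x <= hit_prob_from m p p' n.+1 x.
Proof.
elim: n x => [|n IHn] x.
  by have /andP[+ _] := hit_prob_from01 1 x; rewrite /=; case: eqP.
rewrite /=; case: ifP => _; first exact: lexx.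
case: ifP => _; first exact: lexx.
have /andP[u0 u1] := up_prob01 x.
by apply: lerD; apply: ler_wpM2l; rewrite ?subr_ge0.
Qed.

End HitProbBounds.

Section HitProbLimit.
Variables (R : realType) (m : nat) (p p' : R).
Hypotheses (p01 : 0 <= p <= 1) (p'01 : 0 <= p' <= 1).

Definition hit_prob (x : int) : R := sup (range (hit_prob_from m p p' ^~ x)).

Lemma cvg_hit_prob x : hit_prob_from m p p' ^~ x @ \oo --> hit_prob x.
Proof.
apply: nondecreasing_cvgn; first by apply/nondecreasing_seqP => n; exact: hit_prob_fromS_ge.
by exists 1 => _ [n _ <-]; have /andP[] := hit_prob_from01 m p01 p'01 n x.
Qed.

Lemma hit_prob_cst x c : (forall n, hit_prob_from m p p' n x = c) -> hit_prob x = c.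
Proof.
move=> cst; have cvg_c : hit_prob_from m p p' ^~ x @ \oo --> c.
  by rewrite (funext cst); exact: cvg_cst.
exact: cvg_unique (@cvg_hit_prob x) cvg_c.
Qed.

Lemma hit_prob_m : hit_prob m%:Z = 1.
Proof. by apply: hit_prob_cst => -[|n] /=; rewrite eqxx. Qed.

Lemma hit_prob_neg_m : (0 < m)%N -> hit_prob (- m%:Z) = 0.
Proof.
move=> m_gt0; have /negbTE neq_m : - m%:Z != m%:Z by lia.
by apply: hit_prob_cst => -[|n] /=; rewrite neq_m ?eqxx.
Qed.

Lemma hit_prob_harmonic x : x != m%:Z -> x != - m%:Z ->
  hit_prob x = up_prob m p p' x * hit_prob (x + 1) +
               (1 - up_prob m p p' x) * hit_prob (x - 1).
Proof.
move=> /negbTE neq_m /negbTE neq_neg_m.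
have cvg_rhs : hit_prob_from m p p' ^~ x @ \oo -->
    up_prob m p p' x * hit_prob (x + 1) + (1 - up_prob m p p' x) * hit_prob (x - 1).
  rewrite -cvg_shiftS /=; under eq_fun do rewrite neq_m neq_neg_m.
  by apply: cvgD; apply: cvgMr; exact: cvg_hit_prob.
exact: cvg_unique (@cvg_hit_prob x) cvg_rhs.
Qed.

Lemma hit_prob0_odds : (0 < m)%N ->
  p' * p ^+ m.-1 * (1 - hit_prob 0) = (1 - p') * (1 - p) ^+ m.-1 * hit_prob 0.
Proof.
move=> m_gt0.
apply: (@two_sided_ruin _ _ _ _ (fun i => hit_prob i%:Z) (fun i => hit_prob (- i%:Z))).
- by rewrite /= oppr0.
- exact: hit_prob_m.
- exact: hit_prob_neg_m.
- move=> i lt_i2m; rewrite hit_prob_harmonic ?up_prob_off_lattice; try lia.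
  by congr (_ * hit_prob _ + _ * hit_prob _); lia.
- move=> i lt_i2m; rewrite hit_prob_harmonic ?up_probN ?up_prob_off_lattice; try lia.
  by congr (_ * hit_prob _ + _ * hit_prob _); lia.
- by rewrite /= hit_prob_harmonic ?up_prob0 ?add0r ?sub0r //; lia.
Qed.

End HitProbLimit.

Theorem lemma2p1 (R : realType) (m : nat) (p p' : R) :
  (1 <= m)%N -> 0 <= p <= 1 -> 0 <= p' <= 1 -> `|p - p'| < 1 ->
  hit_prob_upto m p p' @ \oo -->
    (p' * p ^+ m.-1) / (p' * p ^+ m.-1 + (1 - p') * (1 - p) ^+ m.-1).
Proof.
move=> m_gt0 p01 p'01 p_p'.
rewrite (funext (hit_prob_uptoE m p p')).
have := ruin_denom_gt0 m.-1 p01 p'01 p_p'.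
have := hit_prob0_odds p01 p'01 m_gt0.
set A := p' * _; set B := (1 - p') * _; set L := hit_prob _ _ _ _ => odds /lt0r_neq0 AB_neq0.
suff A_eq : A = L * (A + B) by rewrite [X in X / _]A_eq mulfK //; exact: cvg_hit_prob.
by transitivity (A * (1 - L) + A * L); [ring | rewrite odds; ring].
Qed.
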